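(* Assume $r(\boldsymbol\gamma)\le2+\alpha\le R(\boldsymbol\gamma)$ and let $(\mathbf A^{\rm d},\mathbf q^{\rm d})$ be an equilibrium with $\mathbf A^{\rm d}\mathbf q^{\rm d}=\boldsymbol\beta$, $\mathbf q^{\rm d}=\boldsymbol\gamma/(2+\alpha)$. Let $\boldsymbol\sigma\in\{-1,1\}^n$ and let $(\mathbf A^{\boldsymbol\sigma},\mathbf q^{\boldsymbol\sigma})$ be an equilibrium with $\mathbf a_i^{\boldsymbol\sigma}=\sigma_i\boldsymbol\beta$ for all $i$ (so $\mathbf q^{\boldsymbol\sigma}=\frac{\boldsymbol\gamma}{2+\alpha}-\frac{\alpha(\boldsymbol\sigma^\top\boldsymbol\gamma-(2+\alpha))}{(2+\alpha)(2+(n+1)\alpha)}\boldsymbol\sigma$). Then $\Omega(\mathbf A^{\rm d},\mathbf q^{\rm d})>\Omega(\mathbf A^{\boldsymbol\sigma},\mathbf q^{\boldsymbol\sigma})$ whenever $$\boldsymbol\sigma^\top\boldsymbol\gamma>2+\alpha\qquad\text{or}\qquad \boldsymbol\sigma^\top\boldsymbol\gamma<\frac{n\alpha(2+\alpha)}{2(1+\alpha)(2+(n+1)\alpha)+n\alpha}.$$ In particular: (i) for $\boldsymbol\sigma=\mathbf 1$ (all $\mathbf a_i=\boldsymbol\beta$), $\Omega(\mathbf A^{\rm d},\mathbf q^{\rm d})\ge\Omega(\mathbf A^{\mathbf 1},\mathbf q^{\mathbf 1})$, with strict inequality unless $R(\boldsymbol\gamma)=2+\alpha$; (ii) $\Omega(\mathbf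 A^{\rm d},\mathbf q^{\rm d})>\Omega(\mathbf A^{\boldsymbol\sigma},\mathbf q^{\boldsymbol\sigma})$ whenever $\boldsymbol\sigma^\top\boldsymbol\gamma\le0$.
   Context: Model: integers $n\ge2$, $m\ge2$; $\alpha>0$, $\boldsymbol\beta\in\mathbb R^m$ with $\|\boldsymbol\beta\|_2=1$, $\boldsymbol\gamma\in\mathbb R^n$ with all $\gamma_i>0$. With $\mathbf x=\mathbf A\mathbf q$, total surplus $\Omega(\mathbf A,\mathbf q)=\alpha(\mathbf x^\top\boldsymbol\beta-\tfrac12\mathbf x^\top\mathbf x)+\mathbf q^\top\boldsymbol\gamma-\tfrac12\mathbf q^\top\mathbf q$. Oligopoly: firm $i$ chooses a unit vector $\mathbf a_i\in\mathbb R^m$ and $q_i\ge0$ to maximize $\Pi_i=\alpha q_i\mathbf a_i^\top(\boldsymbol\beta-\sum_{j\ne i}q_j\mathbf a_j)-(1+\alpha)q_i^2+\gamma_iq_i$ given others; $\mathbf A=[\mathbf a_1,\dots,\mathbf a_n]$; an equilibrium is a profile of mutual best responses. $R(\mathbf v)=\|\mathbf v\|_1$, $r(\mathbf v)=2\|\mathbf v\|_\infty-\|\mathbf v\|_1$. *)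

(* Vectors are column vectors 'cV[R]_k over a real field R;
   the strategy profile A is an m x n matrix whose i-th column is a_i. *)
From mathcomp Require Import all_boot all_order all_algebra.
Set Implicit Arguments. Unset Strict Implicit. Unset Printing Implicit Defensive.
Import Order.TTheory GRing.Theory Num.Theory.
Local Open Scope ring_scope.

Section Model.
Variable R : realFieldType.

Definition dotv (k : nat) (u v : 'cV[R]_k) : R := \sum_(i < k) u i 0 * v i 0.

Definition Rnorm1 (k : nat) (v : 'cV[R]_k) : R := \sum_(i < k) `|v i 0|.
Definition normInf (k : nat) (v : 'cV[R]_k) : R :=
  \big[Num.max/0]_(i < k) `|v i 0|.
Definition rsmall (k : nat) (v : 'cV[R]_k) : R := 2 * normInf v - Rnorm1 v.

Definition Omega (m n : nat) (alpha : R) (beta : 'cV[R]_m) (gamma : 'cV[R]_n)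
  (A : 'M[R]_(m, n)) (q : 'cV[R]_n) : R :=
  let x := A *m q in
  alpha * (dotv x beta - 2^-1 * dotv x x) + dotv q gamma - 2^-1 * dotv q q.

Definition profit (m n : nat) (alpha : R) (beta : 'cV[R]_m) (gamma : 'cV[R]_n)
  (A : 'M[R]_(m, n)) (q : 'cV[R]_n) (i : 'I_n) (a : 'cV[R]_m) (qi : R) : R :=
  alpha * qi * dotv a (beta - \sum_(j < n | j != i) q j 0 *: col j A)
  - (1 + alpha) * qi ^+ 2 + gamma i 0 * qi.

Definition unit_vec (m : nat) (a : 'cV[R]_m) : Prop := dotv a a = 1.

Definition equilibrium (m n : nat) (alpha : R) (beta : 'cV[R]_m)
  (gamma : 'cV[R]_n) (A : 'M[R]_(m, n)) (q : 'cV[R]_n) : Prop :=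
  forall i : 'I_n,
    unit_vec (col i A) /\ 0 <= q i 0 /\
    (forall (a : 'cV[R]_m) (qi : R), unit_vec a -> 0 <= qi ->
       profit alpha beta gamma A q i a qi
       <= profit alpha beta gamma A q i (col i A) (q i 0)).

End Model.

(* In an aligned profile every firm sells along +-beta, so firm i's problem is a
   one-dimensional concave quadratic in its quantity; comparing the two
   directions +-sigma_i beta forces the interior first-order condition, which
   pins down q^sigma = (gamma + alpha (1 - s) sigma) / (2 + alpha) with
   s = sigma^T q^sigma.  Both surpluses then depend only on alpha, n,
   g = sigma^T gamma and gamma^T gamma, and their difference factors as
   alpha (c - g) ((c - g)(c^2 + alpha n) - 2 g (1 + alpha) (c + alpha n)),
   c = 2 + alpha, up to a positive factor; its sign is read off for g > c and
   for g below the threshold.  For sigma = 1 one has g = R(gamma) >= c. *)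
From mathcomp Require Import all_boot all_order all_algebra.
From mathcomp Require Import ring lra.
Set Implicit Arguments. Unset Strict Implicit. Unset Printing Implicit Defensive.
Import Order.TTheory GRing.Theory Num.Theory.
Local Open Scope ring_scope.

Section InnerProduct.
Variables (R : realFieldType) (k : nat).
Implicit Types (u v w : 'cV[R]_k) (a : R).

Lemma dotvC u v : dotv u v = dotv v u.
Proof. by apply: eq_bigr => i _; rewrite mulrC. Qed.

Lemma dotvZl a u v : dotv (a *: u) v = a * dotv u v.
Proof. by rewrite /dotv mulr_sumr; apply: eq_bigr => i _; rewrite mxE mulrA. Qed.

Lemma dotvZr a u v : dotv u (a *: v) = a * dotv u v.
Proof. by rewrite dotvC dotvZl dotvC. Qed.

Lemma dotvDl u v w : dotv (u + v) w = dotv u w + dotv v w.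
Proof. by rewrite /dotv -big_split; apply: eq_bigr => i _; rewrite mxE mulrDl. Qed.

Lemma dotvDr u v w : dotv w (u + v) = dotv w u + dotv w v.
Proof. by rewrite dotvC dotvDl !(dotvC w). Qed.

Lemma sign_sqr (e : R) : e = 1 \/ e = -1 -> e * e = 1.
Proof. by case=> ->; rewrite ?mulr1 ?mulrNN ?mulr1. Qed.

Lemma dotv_sign_self (sigma : 'cV[R]_k) :
  (forall i, sigma i 0 = 1 \/ sigma i 0 = -1) -> dotv sigma sigma = k%:R.
Proof.
move=> hsig; rewrite /dotv (eq_bigr (fun _ => 1)) ?sumr_const ?card_ord //.
by move=> i _; apply: sign_sqr.
Qed.

Lemma dotv_ones_Rnorm1 (sigma v : 'cV[R]_k) :
  (forall i, sigma i 0 = 1) -> (forall i, 0 <= v i 0) -> dotv sigma v = Rnorm1 v.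
Proof.
by move=> h1 hv; apply: eq_bigr => i _; rewrite h1 mul1r ger0_norm.
Qed.

End InnerProduct.

(* The interior maximiser of [k x - c x^2] is [k / 2c]; a boundary maximiser
   [q = 0] with [k < 0] is excluded because the competing coefficient [k'] is
   then positive and yields a strictly positive value. *)
Lemma quadratic_best_response (R : realFieldType) (c k k' q : R) :
  0 < c -> 0 <= q -> 0 < k + k' ->
  (forall x, 0 <= x -> k * x - c * x ^+ 2 <= k * q - c * q ^+ 2) ->
  (forall x, 0 <= x -> k' * x - c * x ^+ 2 <= k * q - c * q ^+ 2) ->
  2 * c * q = k.
Proof.
move=> c0 q0 kk' maxk maxk'.
have c2 : 0 < 2 * c by rewrite mulr_gt0.
case: (lerP 0 k) => k0.
  have := maxk (k / (2 * c)) (divr_ge0 k0 (ltW c2)).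
  set x := k / _; have kx : k = 2 * c * x by rewrite mulrC divfK ?gt_eqF.
  rewrite kx => hx.
  have : c * (q - x) ^+ 2 <= 0 by nra.
  rewrite pmulr_rle0 // => hsq.
  have : (q - x) ^+ 2 == 0 by rewrite eq_le hsq sqr_ge0.
  by rewrite sqrf_eq0 subr_eq0 => /eqP ->.
have k'0 : 0 < k' by lra.
have := maxk' (k' / (2 * c)) (divr_ge0 (ltW k'0) (ltW c2)).
set x := k' / _; have k'x : k' = 2 * c * x by rewrite mulrC divfK ?gt_eqF.
have x0 : 0 < x by rewrite divr_gt0.
rewrite k'x; nra.
Qed.

Definition omega_dominant (R : realFieldType) (a G : R) : R :=
  a * (1 - 2^-1) + (2 + a)^-1 * G - 2^-1 * ((2 + a)^-1 * ((2 + a)^-1 * G)).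

Definition omega_aligned (R : realFieldType) (a nn g G s : R) : R :=
  a * (s - 2^-1 * s ^+ 2) + (2 + a)^-1 * (G + a * (1 - s) * g)
  - 2^-1 * ((2 + a)^-1 * ((2 + a)^-1 *
      (G + 2 * (a * (1 - s)) * g + (a * (1 - s)) ^+ 2 * nn))).

Section AlignedProfile.
Variables (R : realFieldType) (m n : nat) (alpha : R).
Variables (beta : 'cV[R]_m) (gamma : 'cV[R]_n).
Variables (A : 'M[R]_(m, n)) (q sigma : 'cV[R]_n).
Hypothesis beta_unit : dotv beta beta = 1.
Hypothesis colA : forall j, col j A = sigma j 0 *: beta.

Lemma mulmx_aligned : A *m q = dotv q sigma *: beta.
Proof.
apply/matrixP => k j; rewrite ord1 !mxE /dotv mulr_suml.
apply: eq_bigr => i _.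
have -> : A k i = col i A k 0 by rewrite mxE.
by rewrite colA mxE; ring.
Qed.

Lemma profit_aligned i e x :
  profit alpha beta gamma A q i (e *: beta) x =
  (alpha * e * (1 - (dotv q sigma - q i 0 * sigma i 0)) + gamma i 0) * x
  - (1 + alpha) * x ^+ 2.
Proof.
have others : \sum_(j < n | j != i) q j 0 *: col j A =
              (dotv q sigma - q i 0 * sigma i 0) *: beta.
  have -> : dotv q sigma - q i 0 * sigma i 0 =
            \sum_(j < n | j != i) q j 0 * sigma j 0.
    by rewrite /dotv (bigD1 i) //= addrC addrK.
  by rewrite scaler_suml; apply: eq_bigr => j _; rewrite colA scalerA.
rewrite /profit others -{2}(scale1r beta) -scalerBl dotvZl dotvZr beta_unit.
ring.
Qed.

Hypothesis sigma_sign : forall i, sigma i 0 = 1 \/ sigma i 0 = -1.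

Lemma aligned_equilibrium_quantities :
  0 < alpha -> (forall i, 0 < gamma i 0) ->
  equilibrium alpha beta gamma A q ->
  q = (2 + alpha)^-1 *: (gamma + (alpha * (1 - dotv q sigma)) *: sigma).
Proof.
move=> a0 g0 eqA; apply/matrixP => i j; rewrite ord1 !mxE.
have [_ [q0 best]] := eqA i.
have unit_dir e : e * e = 1 -> unit_vec (e *: beta).
  by move=> ee; rewrite /unit_vec dotvZl dotvZr beta_unit mulr1.
have ss := sign_sqr (sigma_sign i).
have foc : 2 * (1 + alpha) * q i 0 =
  alpha * sigma i 0 * (1 - (dotv q sigma - q i 0 * sigma i 0)) + gamma i 0.
  apply: (quadratic_best_response (k' := alpha * - sigma i 0 *
            (1 - (dotv q sigma - q i 0 * sigma i 0)) + gamma i 0)) => //.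
  - lra.
  - by rewrite mulrN mulNr addrACA subrr add0r; have := g0 i; lra.
  - move=> x x0; have := best _ x (unit_dir _ ss) x0.
    by rewrite colA !profit_aligned.
  - move=> x x0; have := best _ x (unit_dir (- sigma i 0) _) x0.
    by rewrite colA !profit_aligned; apply; rewrite mulrNN.
apply: (mulfI (x := 2 + alpha)); first by apply: lt0r_neq0; lra.
rewrite mulrA mulfV ?mul1r; last by apply: lt0r_neq0; lra.
have -> : (2 + alpha) * q i 0 = 2 * (1 + alpha) * q i 0 - alpha * q i 0 by ring.
rewrite foc; have -> : alpha * q i 0 = alpha * q i 0 * (sigma i 0 * sigma i 0).
  by rewrite ss mulr1.
ring.
Qed.

Hypothesis q_aligned :
  q = (2 + alpha)^-1 *: (gamma + (alpha * (1 - dotv q sigma)) *: sigma).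

Lemma aligned_total_quantity : 0 < alpha ->
  (2 + alpha) * dotv q sigma =
  dotv sigma gamma + alpha * (1 - dotv q sigma) * n%:R.
Proof.
move=> a0; rewrite {1}q_aligned dotvZl dotvDl dotvZl dotv_sign_self // dotvC.
by rewrite mulrA mulfV ?mul1r //; apply: lt0r_neq0; lra.
Qed.

Lemma Omega_aligned :
  Omega alpha beta gamma A q =
  omega_aligned alpha n%:R (dotv sigma gamma) (dotv gamma gamma) (dotv q sigma).
Proof.
rewrite /Omega /= mulmx_aligned.
have hq := q_aligned; set s := dotv q sigma in hq *; clearbody s.
rewrite hq !dotvZl !dotvZr !dotvDl !dotvDr !dotvZl !dotvZr.
rewrite beta_unit (dotv_sign_self sigma_sign) (dotvC gamma sigma).
by rewrite /omega_aligned; ring.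
Qed.

End AlignedProfile.

Lemma Omega_dominant (R : realFieldType) m n (alpha : R) (beta : 'cV[R]_m)
    (gamma : 'cV[R]_n) (A : 'M[R]_(m, n)) (q : 'cV[R]_n) :
  dotv beta beta = 1 -> A *m q = beta -> q = (2 + alpha)^-1 *: gamma ->
  Omega alpha beta gamma A q = omega_dominant alpha (dotv gamma gamma).
Proof.
move=> hb hx hq; rewrite /Omega /= hx hb hq !dotvZl !dotvZr.
by rewrite /omega_dominant; ring.
Qed.

Section SurplusGap.
Variables (R : realFieldType) (a nn : R).
Hypotheses (a_gt0 : 0 < a) (nn_ge0 : 0 <= nn).

Local Notation c := (2 + a).
Local Notation N := (2 + a + a * nn).

Definition gap_numerator (g : R) : R :=
  a * (c - g) * ((c - g) * (c ^+ 2 + a * nn) - 2 * g * (1 + a) * N).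

Lemma c_gt0 : 0 < c. Proof. by rewrite addr_gt0. Qed.

Lemma N_gt0 : 0 < N.
Proof. by apply: ltr_wpDr c_gt0; rewrite mulr_ge0 // ltW. Qed.

Lemma gap_denominator_gt0 : 0 < 2 * c ^+ 2 * N ^+ 2.
Proof. by rewrite !mulr_gt0 ?exprn_gt0 ?c_gt0 ?N_gt0. Qed.

(* [1 - s] is eliminated through [(1 - s) N = c - g], a rewriting of the
   total-quantity equation. *)
Lemma omega_gapE (g G s : R) : c * s = g + a * (1 - s) * nn ->
  (omega_dominant a G - omega_aligned a nn g G s) * (2 * c ^+ 2 * N ^+ 2) =
  gap_numerator g.
Proof.
move=> hs; have tN : (1 - s) * N = c - g by nra.
rewrite /gap_numerator -tN /omega_dominant /omega_aligned; field.
exact: lt0r_neq0 c_gt0.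
Qed.

Lemma omega_aligned_lt (g G s : R) : c * s = g + a * (1 - s) * nn ->
  0 < gap_numerator g -> omega_aligned a nn g G s < omega_dominant a G.
Proof.
move=> hs gap0; rewrite -subr_gt0 -(pmulr_lgt0 _ gap_denominator_gt0).
by rewrite omega_gapE.
Qed.

Lemma omega_aligned_le (g G s : R) : c * s = g + a * (1 - s) * nn ->
  0 <= gap_numerator g -> omega_aligned a nn g G s <= omega_dominant a G.
Proof.
move=> hs gap0; rewrite -subr_ge0 -(pmulr_lge0 _ gap_denominator_gt0).
by rewrite omega_gapE.
Qed.

Lemma gap_numerator_ge0 (g : R) : c <= g -> 0 <= gap_numerator g.
Proof.
move=> cg; have hN := N_gt0; have a0 := a_gt0; have nn0 := nn_ge0.
rewrite /gap_numerator -mulrA.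
apply: mulr_ge0; first lra.
apply: mulr_le0; first lra.
have : (c - g) * (c ^+ 2 + a * nn) <= 0 by rewrite mulr_le0_ge0 //; nra.
have : 0 <= 2 * g * (1 + a) * N by rewrite !mulr_ge0 //; lra.
lra.
Qed.

Lemma gap_numerator_gt0_above (g : R) : c < g -> 0 < gap_numerator g.
Proof.
move=> cg; have hN := N_gt0; have a0 := a_gt0; have nn0 := nn_ge0.
rewrite /gap_numerator -mulrA.
apply: mulr_gt0 => //; rewrite nmulr_rgt0; last lra.
have : (c - g) * (c ^+ 2 + a * nn) <= 0 by rewrite mulr_le0_ge0; nra.
have : 0 < 2 * g * (1 + a) * N by rewrite !mulr_gt0 //; lra.
lra.
Qed.

(* The second factor equals [c^2 (c - g) + (nn a c - g (2 (1 + a) N + nn a))],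
   and the threshold makes the bracket positive, which also forces [g < c]. *)
Lemma gap_numerator_gt0_below (g : R) :
  g < nn * a * c / (2 * (1 + a) * N + nn * a) -> 0 < gap_numerator g.
Proof.
have hN := N_gt0; have a0 := a_gt0; have nn0 := nn_ge0.
have D0 : 0 < 2 * (1 + a) * N + nn * a by nra.
rewrite ltr_pdivlMr // => hg.
have gc : g < c.
  rewrite ltNge; apply/negP => cg.
  have : c * (2 * (1 + a) * N + nn * a) <= g * (2 * (1 + a) * N + nn * a).
    by rewrite ler_pM2r.
  have : nn * a * c < c * (2 * (1 + a) * N + nn * a).
    by rewrite mulrC ltr_pM2l; nra.
  lra.
rewrite /gap_numerator -mulrA; apply: mulr_gt0 => //; apply: mulr_gt0; first lra.
have -> : (c - g) * (c ^+ 2 + a * nn) - 2 * g * (1 + a) * N =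
  c ^+ 2 * (c - g) + (nn * a * c - g * (2 * (1 + a) * N + nn * a)) by ring.
have : 0 < c ^+ 2 * (c - g) by rewrite mulr_gt0 ?exprn_gt0; lra.
lra.
Qed.

Lemma gap_threshold_gt0 : 0 < nn -> 0 < nn * a * c / (2 * (1 + a) * N + nn * a).
Proof.
move=> nn0; have hN := N_gt0; have a0 := a_gt0.
by rewrite divr_gt0 ?mulr_gt0 //; nra.
Qed.

End SurplusGap.

Theorem theorem4 (R : realFieldType) (m n : nat) (alpha : R)
  (beta : 'cV[R]_m) (gamma : 'cV[R]_n)
  (Ad : 'M[R]_(m, n)) (qd : 'cV[R]_n)
  (sigma : 'cV[R]_n) (As : 'M[R]_(m, n)) (qs : 'cV[R]_n) :
  (2 <= n)%N -> (2 <= m)%N -> 0 < alpha ->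
  dotv beta beta = 1 ->
  (forall i, 0 < gamma i 0) ->
  rsmall gamma <= 2 + alpha -> 2 + alpha <= Rnorm1 gamma ->
  equilibrium alpha beta gamma Ad qd ->
  Ad *m qd = beta ->
  qd = (2 + alpha)^-1 *: gamma ->
  (forall i, sigma i 0 = 1 \/ sigma i 0 = -1) ->
  equilibrium alpha beta gamma As qs ->
  (forall i, col i As = sigma i 0 *: beta) ->
  [/\ (dotv sigma gamma > 2 + alpha \/
       dotv sigma gamma < n%:R * alpha * (2 + alpha) /
         (2 * (1 + alpha) * (2 + n.+1%:R * alpha) + n%:R * alpha)) ->
        Omega alpha beta gamma Ad qd > Omega alpha beta gamma As qs,
      (forall i, sigma i 0 = 1) ->
        Omega alpha beta gamma Ad qd >= Omega alpha beta gamma As qs /\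
        (Rnorm1 gamma <> 2 + alpha ->
           Omega alpha beta gamma Ad qd > Omega alpha beta gamma As qs)
    & dotv sigma gamma <= 0 ->
        Omega alpha beta gamma Ad qd > Omega alpha beta gamma As qs].
Proof.
move=> n2 _ a0 hb g0 _ hR _ hxd hqd hsig eqs colAs.
have hqs := aligned_equilibrium_quantities hb colAs hsig a0 g0 eqs.
have hs := aligned_total_quantity hsig hqs a0.
have nn0 : 0 <= n%:R :> R := ler0n _ _.
rewrite (Omega_dominant hb hxd hqd) (Omega_aligned hb colAs hsig hqs).
have -> : 2 + n.+1%:R * alpha = 2 + alpha + alpha * n%:R by rewrite -natr1; ring.
split.
- case=> hg; apply: (omega_aligned_lt a0 nn0 _ hs).
    exact: gap_numerator_gt0_above.
  exact: gap_numerator_gt0_below.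
- move=> ones; rewrite (dotv_ones_Rnorm1 ones (fun i => ltW (g0 i))) in hs *.
  split; first exact/(omega_aligned_le a0 nn0 _ hs)/gap_numerator_ge0.
  move=> hne; apply: (omega_aligned_lt a0 nn0 _ hs).
  apply: gap_numerator_gt0_above => //.
  by rewrite lt_neqAle hR andbT eq_sym; apply/eqP.
- move=> hg; apply: (omega_aligned_lt a0 nn0 _ hs).
  apply: gap_numerator_gt0_below => //.
  apply: le_lt_trans hg (gap_threshold_gt0 a0 nn0 _).
  by rewrite ltr0n (leq_trans _ n2).
Qed.
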